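(* Assume $\delta d_0>2$, let $t=d_0/2$, $\varepsilon_0=\frac{d_0}{2}-\frac1\delta$, and $\gamma=\left(1+\frac ct\right)^{-1}\frac{\delta d_0-1}{d_0-1}\alpha$. Let $G=(L\cup R,E)$ be a $(c,d,\alpha,\delta)$-bipartite expander with $L=[n]$, $C_0\subseteq\mathbb{F}_2^d$ a linear code of minimum distance $d_0$, $x\in\mathbb{F}_2^n$ and $y\in T(G,C_0)$ with $d_H(x,y)\le\gamma n$. Then $\mathsf{DeepFlip}(x)$ outputs an element $x'\in\mathbb{F}_2^n$, in $O(|F(x,y)|)$ time, such that $|F(x',y)|\le\frac12|F(x,y)|$.
   Context: Binary linear codes, Hamming distance $d_H$. A bipartite graph $G=(L\cup R,E)$ is $(c,d)$-regular if left degrees are $c$ and right degrees $d$; $N(S)$ is the neighborhood of $S$. A $(c,d,\alpha,\delta)$-bipartite expander ($c,d$ positive integers, $\alpha,\delta\in(0,1]$, all constants) is a $(c,d)$-regular bipartite graph with $|N(S)|\ge\delta c|S|$ for every $S\subseteq L$, $|S|\le\alpha|L|$. Tanner code: $L=[n]$, for each $v\in R$ a fixed ordering of $N(v)$ defines $x_{N(v)}\in\mathbb{F}_2^d$, and $T(G,C_0)=\{x: x_{N(v)}\in C_0\ \forall v\in R\}$. $F(x,y)=\{i\in[n]:x_i\ne y_i\}$; $U(x)=\{v\in R: x_{N(v)}\notin C_0\}$. $\mathsf{Decode}(z)$ for $z\in\mathbb{F}_2^d$ is the codeword of $C_0$ closest to $z$, ties broken lexicographically. $W=\{\frac{i}{cd_0}: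 i\in\mathbb{Z},0\le i\le cd_0\}$. $\mathsf{DeterFlip}(x,q)$ for $q\in\mathbb{R}$: set $p_1=\dots=p_n=0$; for each $v\in R$, let $w_v=\mathsf{Decode}(x_{N(v)})$; if $1\le d_H(w_v,x_{N(v)})<t$, let $i$ be the smallest element of $N(v)$ where $w_v$ and $x_{N(v)}$ differ and increase $p_i$ by $\frac{t-d_H(w_v,x_{N(v)})}{ct}$; then flip every $x_i$ with $p_i=q$ and return the result. $\mathsf{DeepFlip}(x)$: let $\varepsilon=\frac{\varepsilon_0\delta}{2ct^2}$ and $s=\left\lceil\log\left(\frac{\delta d_0-1}{2(d_0-1)}\right)/\log(1-\varepsilon)\right\rceil$; set $k_{\min}=|R|+1$, $x_{\min}=\perp$. For each $(q_1,\dots,q_s)\in(W\setminus\{0\})^s$: set $x^{(0)}=x$ and for $i=1,\dots,s$ set $x^{(i)}=\mathsf{DeterFlip}(x^{(i-1)},q_i)$; if $|U(x^{(i)})|>c\gamma n$ abandon this sequence; otherwise, if $i=s$ and $|U(x^{(s)})|<k_{\min}$, set $k_{\min}=|U(x^{(s)})|$ and $x_{\min}=x^{(s)}$. Return $x_{\min}$. Running time is in the RAM model with adjacency lists, with $U(x)$ and the $p_i$ maintained in data structures (initialized once beforehand) allowing $U(x)$ to be enumerated in $O(|U(x)|)$ time and updated in $O(1)$ time per bit flip; constants may depend on $c,d,\alpha,\delta,C_0$. *)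

From HB Require Import structures.
From mathcomp Require Import all_boot all_order all_algebra.
From mathcomp Require Import reals exp.
Set Implicit Arguments. Unset Strict Implicit. Unset Printing Implicit Defensive.
Import Order.TTheory GRing.Theory Num.Theory.
Local Open Scope ring_scope.

Notation word n := 'rV['F_2]_n.

Definition Fset (n : nat) (x y : word n) : {set 'I_n} :=
  [set i | x 0 i != y 0 i].

Definition dH (n : nat) (x y : word n) : nat := #|Fset x y|.

Definition linear_code (d : nat) (C0 : {set word d}) : Prop :=
  0 \in C0 /\ (forall u w, u \in C0 -> w \in C0 -> u + w \in C0).

Definition min_distance (d : nat) (C0 : {set word d}) (d0 : nat) : Prop :=
  (exists u, exists w, [/\ u \in C0, w \in C0, u != w & dH u w = d0]) /\
  (forall u w, u \in C0 -> w \in C0 -> u != w -> (d0 <= dH u w)%N).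

(* nbr v is the fixed ordering of N(v) (a d-tuple of left vertices).   *)
Section Graph.
Variables (n d : nat) (Rt : finType) (nbr : Rt -> d.-tuple 'I_n).

Definition Nset (S : {set 'I_n}) : {set Rt} :=
  [set v | [exists i in S, i \in nbr v]].

Definition regular (c : nat) : Prop :=
  (forall v, uniq (nbr v)) /\
  (forall i : 'I_n, #|[set v | i \in nbr v]| = c).

Definition expander {R : realType} (c : nat) (alpha delta : R) : Prop :=
  regular c /\
  (forall S : {set 'I_n}, #|S|%:R <= alpha * n%:R ->
     delta * c%:R * #|S|%:R <= #|Nset S|%:R).

Definition restrict (x : word n) (v : Rt) : word d :=
  \row_(k < d) x 0 (tnth (nbr v) k).

Definition Tanner (C0 : {set word d}) : {set word n} :=
  [set x | [forall v, restrict x v \in C0]].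

Definition Uset (C0 : {set word d}) (x : word n) : {set Rt} :=
  [set v | restrict x v \notin C0].
End Graph.

(* Decoding of the local code: nearest codeword, ties broken           *)
(* lexicographically (coordinate 0 most significant, 0 < 1).  The      *)
(* lexicographic order on F_2^d is encoded by the binary value lexrank *)
(* and the key dH * 2^d + lexrank orders first by distance then lex.   *)
Definition lexrank (d : nat) (w : word d) : nat :=
  \sum_(k < d) ((w ord0 k != 0%R) * 2 ^ (d.-1 - k))%N.

Definition Decode (d : nat) (C0 : {set word d}) (z : word d) : word d :=
  [arg min_(w < 0 in C0) (dH w z * 2 ^ d + lexrank w)%N].

Section Algo.
Variables (R : realType) (c d d0 : nat) (alpha delta : R).
Variables (C0 : {set word d}).
Variables (n : nat) (Rt : finType) (nbr : Rt -> d.-tuple 'I_n).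

Definition tpar : R := d0%:R / 2.
Definition eps0 : R := d0%:R / 2 - delta^-1.
Definition gammapar : R :=
  (1 + c%:R / tpar)^-1 * ((delta * d0%:R - 1) / (d0%:R - 1)) * alpha.
Definition epspar : R := eps0 * delta / (2 * c%:R * tpar ^+ 2).
Definition spar : nat :=
  `|Num.ceil (ln ((delta * d0%:R - 1) / (2 * (d0%:R - 1))) / ln (1 - epspar))|%N.

Definition Wset : seq R := [seq i%:R / (c * d0)%:R | i <- iota 0 (c * d0).+1].
Definition Wnz : seq R := [seq q <- Wset | q != 0].

Fixpoint qseqs (k : nat) : seq (seq R) :=
  if k is k'.+1 then [seq q :: qs | q <- Wnz, qs <- qseqs k'] else [:: [::]].

Definition wv (x : word n) (v : Rt) : word d := Decode C0 (restrict nbr x v).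
Definition kv (x : word n) (v : Rt) : nat := dH (wv x v) (restrict nbr x v).

Definition diffN (x : word n) (v : Rt) : {set 'I_n} :=
  [set tnth (nbr v) k | k in [set k : 'I_d | wv x v 0 k != restrict nbr x v 0 k]].

Definition firstdiff (x : word n) (v : Rt) (i : 'I_n) : bool :=
  (i \in diffN x v) && [forall j in diffN x v, (i <= j)%N].

Definition active (x : word n) (v : Rt) : bool :=
  (1 <= kv x v)%N && ((kv x v)%:R < tpar).

(* final value of p_i *)
Definition pval (x : word n) (i : 'I_n) : R :=
  \sum_(v | active x v && firstdiff x v i) (tpar - (kv x v)%:R) / (c%:R * tpar).

Definition DeterFlip (x : word n) (q : R) : word n :=
  \row_i (if pval x i == q then x 0 i + 1 else x 0 i).

(* running one sequence (q_1,...,q_s) from x; None = abandoned *)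
Fixpoint runseq (x : word n) (qs : seq R) : option (word n) :=
  if qs is q :: qs' then
    let x1 := DeterFlip x q in
    if c%:R * gammapar * n%:R < #|Uset nbr C0 x1|%:R then None
    else runseq x1 qs'
  else Some x.

(* DeepFlip, with the sequences (q_1..q_s) visited in the order [ord]
   (the paper leaves the order unspecified; [ord] must enumerate
   (W\{0})^s, see the theorem).  None = the output \bot. *)
Definition DeepFlip_step (x : word n) (st : nat * option (word n)) (qs : seq R) :=
  match runseq x qs with
  | Some xs => if (#|Uset nbr C0 xs| < st.1)%N then (#|Uset nbr C0 xs|, Some xs)
               else st
  | None => st
  end.

Definition DeepFlip (ord : seq (seq R)) (x : word n) : option (word n) :=
  (foldl (DeepFlip_step x) (#|Rt|.+1, None) ord).2.

(* Cost accounting (RAM model with the data structures of the paper): *)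
(* a call DeterFlip(x,q) costs 1 + |U(x)| (only v in U(x) can have     *)
(* d_H(w_v,x_{N(v)}) >= 1; per-vertex work is O(1) as d, C0 are        *)
(* constants) plus one unit per flipped bit (O(1) update of U and p);  *)
(* each sequence costs one extra unit (bookkeeping of k_min, x_min).   *)
Definition cost_DeterFlip (x : word n) (q : R) : nat :=
  (1 + #|Uset nbr C0 x| + #|Fset x (DeterFlip x q)|)%N.

Fixpoint cost_runseq (x : word n) (qs : seq R) : nat :=
  if qs is q :: qs' then
    let x1 := DeterFlip x q in
    let abandon := (c%:R * gammapar * n%:R < #|Uset nbr C0 x1|%:R :> R) in
    (cost_DeterFlip x q + (if abandon then 0 else cost_runseq x1 qs'))%N
  else 0%N.

Definition cost_DeepFlip (ord : seq (seq R)) (x : word n) : nat :=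
  (\sum_(qs <- ord) (1 + cost_runseq x qs))%N.
End Algo.

(* Let S = F(x, y) and e_v = |S ∩ N(v)|, so that the e_v sum to c|S|.  A check
   that decodes correctly puts the weight d0 - 2 d_H(w_v, x_N(v)) on a bit of S, while
   a check that decodes wrongly is at distance at least d0 - e_v from its decoding;
   hence the weights, counted positively on S and negatively off S, add up to at least
   d0 |N(S)| - 2c|S| >= (delta d0 - 2) c|S|.  Splitting this sum by threshold, some
   q = j / (c d0) makes DeterFlip(x, q) remove an eps fraction of the errors, so some
   sequence in (W \ {0})^s ends with at most (1 - eps)^s |S| errors and is never
   abandoned.  The checks of N(S) outside U(x) see at least d0 errors, which together
   with expansion gives (delta d0 - 1) c|S| <= (d0 - 1) |U(x)|; since DeepFlip minimises
   |U| over all runs, its output has at most half the errors of x.  The constant gamma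
   keeps every non-abandoned run in the range |S| <= alpha n where expansion applies.
   A DeterFlip step costs O(c|S|) and multiplies |S| by at most 1 + c, whence the
   linear running time. *)

From HB Require Import structures.
From mathcomp Require Import all_boot all_order all_algebra.
From mathcomp Require Import reals exp.
From mathcomp Require Import zify ring lra.
Set Implicit Arguments. Unset Strict Implicit. Unset Printing Implicit Defensive.
Import Order.TTheory GRing.Theory Num.Theory.
Local Open Scope ring_scope.

Lemma F2_add1_neq (a b : 'F_2) : (a + 1 != b) = (a == b).
Proof. by move: a b; do 2!case=> [[|[|//]] ?]. Qed.

Section Hamming.
Variable m : nat.
Implicit Types u v w : word m.

Lemma dH_sym u w : dH u w = dH w u.
Proof. by apply: eq_card => i; rewrite !inE eq_sym. Qed.

Lemma dH_triangle u v w : (dH u w <= dH u v + dH v w)%N.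
Proof.
apply: leq_trans (leq_card_setU _ _); apply/subset_leq_card/subsetP => i.
by rewrite !inE; case: (eqVneq (u 0 i) (v 0 i)) => [->|].
Qed.

Lemma dH_eq0 u w : (dH u w == 0%N) = (u == w).
Proof.
rewrite cards_eq0; apply/eqP/eqP => [uw|-> //]; last first.
  by apply/setP => i; rewrite !inE eqxx.
apply/rowP => i; apply/eqP/negPn/negP => uw_i.
by have := in_set0 i; rewrite -uw inE uw_i.
Qed.

Lemma dHxx u : dH u u = 0%N.
Proof. by apply/eqP; rewrite dH_eq0. Qed.
End Hamming.

Lemma lexrank_lt d (w : word d) : (lexrank w < 2 ^ d)%N.
Proof.
have := subn_exp 2 1 d; rewrite exp1n subn1 mul1n.
under eq_bigr do rewrite exp1n muln1.
move=> pow2_sum; apply: (@leq_ltn_trans (2 ^ d).-1); last first.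
  by rewrite prednK // expn_gt0.
rewrite pow2_sum; apply: leq_sum => k _.
by case: (_ != _); rewrite ?mul1n ?mul0n.
Qed.

Section Decoding.
Variables (d d0 : nat) (C0 : {set word d}).
Hypothesis C0_0 : 0 \in C0.

Lemma Decode_in z : Decode C0 z \in C0.
Proof. by rewrite /Decode; case: arg_minnP. Qed.

Lemma Decode_min z w : w \in C0 -> (dH (Decode C0 z) z <= dH w z)%N.
Proof.
rewrite /Decode; case: arg_minnP => // u _ u_min /u_min key_le.
have : (dH u z * 2 ^ d < (dH w z).+1 * 2 ^ d)%N.
  apply: leq_ltn_trans (leq_addr (lexrank u) _) _; apply: leq_ltn_trans key_le _.
  by rewrite mulSnr ltn_add2l lexrank_lt.
by rewrite ltn_mul2r ltnS => /andP[].
Qed.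

Hypothesis C0_dist : min_distance C0 d0.

Lemma min_distance_gt0 : (0 < d0)%N.
Proof.
have [[u [w [_ _ uw <-]]] _] := C0_dist.
by rewrite lt0n dH_eq0.
Qed.

Lemma Decode_unique z w : w \in C0 -> (2 * dH w z < d0)%N -> Decode C0 z = w.
Proof.
move=> w_C0 close; apply/eqP/negPn/negP => Dzw.
have := C0_dist.2 _ _ (Decode_in z) w_C0 Dzw.
have := Decode_min z w_C0; have := dH_triangle (Decode C0 z) z w.
rewrite (dH_sym z w); lia.
Qed.
End Decoding.

Lemma double_counting (I J : finType) (A : {set I}) (r : J -> I -> bool) :
  (\sum_(i in A) #|[set j | r j i]| = \sum_j #|[set i in A | r j i]|)%N.
Proof.
under eq_bigr do rewrite -sum1_card big_mkcond /=.
rewrite exchange_big /=; apply: eq_bigr => j _.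
rewrite -sum1_card big_mkcond /= [RHS]big_mkcond /=; apply: eq_bigr => i _.
by rewrite !inE; case: (i \in A).
Qed.

Lemma markov_card (J : finType) (f : J -> nat) a :
  (a * #|[set j | (a <= f j)%N]| <= \sum_j f j)%N.
Proof.
rewrite -sum1_card big_distrr /= [X in (_ <= X)%N](bigID (mem [set j | (a <= f j)%N])) /=.
by apply: leq_trans (leq_addr _ _); apply: leq_sum => j; rewrite muln1 inE.
Qed.

Lemma natr_card (R : pzSemiRingType) (I : finType) (A : {set I}) :
  (#|A|%:R : R) = \sum_i ((i \in A) : nat)%:R.
Proof. by rewrite -sum1_card big_mkcond natr_sum. Qed.

Lemma exists_ge_weighted_sum (R : realFieldType) (N : nat) (a : nat -> R) :
  (0 < N)%N -> 0 <= \sum_(j < N.+1) j%:R * a j ->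
  exists j, [/\ (0 < j)%N, (j <= N)%N & \sum_(j < N.+1) j%:R * a j <= (N ^ 2)%:R * a j].
Proof.
move=> N_gt0 sum_ge0; have N_ord : (N < N.+1)%N by [].
have [j j_gt0 j_max] := @arg_maxP _ _ _ (Ordinal N_ord) (fun j : 'I_N.+1 => 0 < j)%N
  (fun j => a j) N_gt0.
exists j; split => //; first by rewrite -ltnS.
have le_max : \sum_(k < N.+1) k%:R * a k <= (\sum_(k < N.+1) k)%:R * a j.
  rewrite natr_sum mulr_suml; apply: ler_sum => k _.
  case: (posnP k) => [k0|k_gt0]; first by rewrite k0 mulr0n !mul0r.
  by apply: ler_wpM2l => //; apply: j_max.
have sum_gt0 : 0 < (\sum_(k < N.+1) k)%:R :> R.
  by rewrite ltr0n (bigD1 (Ordinal N_ord)) //= ltn_addr.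
have a_ge0 : 0 <= a j by rewrite -(pmulr_rge0 _ sum_gt0) (le_trans sum_ge0).
apply: (le_trans le_max); rewrite ler_wpM2r // ler_nat.
by rewrite -(big_mkord xpredT (fun k => k)) bin2_sum bin2 -divn2 /=; nia.
Qed.

Lemma expr_ceil_ln_le (R : realType) (e r : R) : 0 < e < 1 -> 0 < r < 1 ->
  (1 - e) ^+ `|Num.ceil (ln r / ln (1 - e))|%N <= r.
Proof.
move=> /andP[e_gt0 e_lt1] /andP[r_gt0 r_lt1].
have e'_gt0 : 0 < 1 - e by lra.
have ln_e'_lt0 : ln (1 - e) < 0 by apply: ln_lt0; lra.
have ln_r_lt0 : ln r < 0 by apply: ln_lt0; lra.
set z := ln r / ln (1 - e).
have z_gt0 : 0 < z by rewrite /z -divrNN divr_gt0 // oppr_gt0.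
have z_le : z <= (`|Num.ceil z|%N)%:R.
  by rewrite natr_absz ger0_norm ?ceil_ge // ceil_ge0; lra.
rewrite -ler_ln ?posrE ?exprn_gt0 // lnXn // -mulr_natr.
have -> : ln r = ln (1 - e) * z by rewrite /z mulrC divfK // lt_eqF.
by rewrite ler_nM2l.
Qed.

Section Thresholds.
Variables (R : realType) (c d0 : nat).

Lemma mem_Wnz (q : R) : q \in Wnz R c d0 ->
  exists2 j, (0 < j <= c * d0)%N & q = j%:R / (c * d0)%:R.
Proof.
rewrite mem_filter => /andP[q_neq0 /mapP[j j_iota q_def]].
exists j => //; move: j_iota; rewrite mem_iota add0n ltnS => /andP[_ ->].
by rewrite andbT lt0n; apply: contraNneq q_neq0 => j0; rewrite q_def j0 mul0r.
Qed.

Lemma Wnz_natr j : (0 < j <= c * d0)%N -> (j%:R / (c * d0)%:R : R) \in Wnz R c d0.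
Proof.
case/andP=> j_gt0 j_le; rewrite mem_filter mulf_neq0 ?invr_eq0 ?pnatr_eq0 -?lt0n //=.
  by apply/mapP; exists j; rewrite // mem_iota add0n ltnS.
exact: leq_trans j_le.
Qed.

Lemma qseqsP k qs : qs \in qseqs R c d0 k ->
  size qs = k /\ {subset qs <= Wnz R c d0}.
Proof.
elim: k qs => [|k IH] qs /=; first by rewrite inE => /eqP ->.
case/allpairsP => -[q qs'] [/= q_W /IH[size_qs' qs'_W] ->].
split=> [|q0]; first by rewrite /= size_qs'.
by rewrite inE => /predU1P[->|/qs'_W].
Qed.

Lemma qseqs_cons k q qs : q \in Wnz R c d0 -> qs \in qseqs R c d0 k ->
  q :: qs \in qseqs R c d0 k.+1.
Proof. exact: (allpairs_f (fun a b => a :: b)). Qed.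
End Thresholds.

Lemma epsparE (R : realType) (c d0 : nat) (delta : R) :
  (0 < c)%N -> (0 < d0)%N -> delta != 0 ->
  epspar c d0 delta = (delta * d0%:R - 2) / (c%:R * d0%:R ^+ 2).
Proof.
move=> c_gt0 d0_gt0 delta_neq0; rewrite /epspar /eps0 /tpar; field.
by rewrite !pnatr_eq0 -!lt0n c_gt0 d0_gt0.
Qed.

Section Constants.
Variables (R : realType) (c d0 : nat) (alpha delta : R).
Hypotheses (c_gt0 : (0 < c)%N) (delta_gt0 : 0 < delta) (delta_le1 : delta <= 1).
Hypothesis delta_d0_gt2 : 2 < delta * d0%:R.

Lemma d0_gt2 : (2 < d0)%N.
Proof.
rewrite -(ltr_nat R); apply: lt_le_trans delta_d0_gt2 _.
by rewrite ler_piMl ?ler0n.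
Qed.

(* Destructed inside proofs because [lra] ignores section hypotheses. *)
Let constant_bounds :
  [/\ 2 < d0%:R :> R, 1 <= c%:R :> R, delta * d0%:R <= d0%:R & 2 < delta * d0%:R].
Proof. by rewrite ltr_nat d0_gt2 ler1n ler_piMl ?ler0n. Qed.

Lemma epspar_gt0_lt1 : 0 < epspar c d0 delta < 1.
Proof.
have [d0R cR dd0 dd2] := constant_bounds.
have cd0_gt0 : 0 < c%:R * d0%:R ^+ 2 :> R by rewrite mulr_gt0 ?exprn_gt0 //; lra.
rewrite epsparE ?gt_eqF ?(ltnW (ltnW d0_gt2)) // divr_gt0 ?subr_gt0 //= ltr_pdivrMr // mul1r.
have : d0%:R <= c%:R * d0%:R ^+ 2 :> R by rewrite expr2; nra.
lra.
Qed.

Lemma gammaparE : gammapar c d0 alpha delta * ((d0%:R + 2 * c%:R) * (d0%:R - 1)) =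
  d0%:R * (delta * d0%:R - 1) * alpha.
Proof. by have [d0R cR _ _] := constant_bounds; rewrite /gammapar /tpar; field; lra. Qed.

Lemma gammapar_le : 0 <= alpha -> gammapar c d0 alpha delta <= alpha.
Proof.
move=> alpha_ge0; have [d0R cR dd0 dd2] := constant_bounds.
have den_gt0 : 0 < (d0%:R + 2 * c%:R) * (d0%:R - 1) :> R by apply: mulr_gt0; lra.
rewrite -(ler_pM2r den_gt0) gammaparE [leRHS]mulrC; apply: ler_wpM2r => //.
by nra.
Qed.

Lemma expr_spar_le : (1 - epspar c d0 delta) ^+ spar c d0 delta <=
  (delta * d0%:R - 1) / (2 * (d0%:R - 1)).
Proof.
have [d0R _ dd0 dd2] := constant_bounds.
apply: expr_ceil_ln_le; first exact: epspar_gt0_lt1.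
by rewrite divr_gt0 ?ltr_pdivrMr //=; lra.
Qed.
End Constants.

Section DeepFlipSelection.
Variables (R : realType) (c d d0 : nat) (alpha delta : R) (C0 : {set word d}).
Variables (n : nat) (Rt : finType) (nbr : Rt -> d.-tuple 'I_n) (x : word n).
Local Notation run := (runseq c d0 alpha delta C0 nbr x).
Local Notation step := (DeepFlip_step c d0 alpha delta C0 nbr x).
Local Notation U z := #|Uset nbr C0 z|.

Lemma DeepFlip_stepP st qs :
  [/\ step st qs = st \/ exists2 z, run qs = Some z & step st qs = (U z, Some z),
      ((step st qs).1 <= st.1)%N &
      forall z, run qs = Some z -> ((step st qs).1 <= U z)%N].
Proof.
rewrite /DeepFlip_step; case: (run qs) => [z|]; last by split=> //; left.
case: ltnP => [U_lt|U_ge] /=.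
  by split=> [|| _ [<-] //]; [right; exists z | exact: ltnW].
by split=> [|//| _ [<-] //]; left.
Qed.

Lemma DeepFlip_foldP st l : let res := foldl step st l in
  [/\ res = st \/ exists2 qs, qs \in l & exists2 z, run qs = Some z & res = (U z, Some z),
      (res.1 <= st.1)%N &
      forall qs z, qs \in l -> run qs = Some z -> (res.1 <= U z)%N].
Proof.
elim: l st => [|qs l IH] st /=; first by split=> //; left.
have [stepE step_le step_min] := DeepFlip_stepP st qs.
have [resE res_le res_min] := IH (step st qs).
split; first case: resE => [->|[qs' qs'_l res_qs']].
- case: stepE => [->|[z run_z ->]]; first by left.
  by right; exists qs; rewrite ?mem_head //; exists z.
- by right; exists qs'; rewrite // inE qs'_l orbT.
- exact: leq_trans res_le step_le.
move=> qs' z; rewrite inE => /predU1P[-> /step_min | qs'_l]; last exact: res_min.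
exact: leq_trans res_le.
Qed.

Lemma DeepFlip_Some ord qs0 z0 : qs0 \in ord -> run qs0 = Some z0 ->
  exists qs z, [/\ qs \in ord, run qs = Some z,
    DeepFlip c d0 alpha delta C0 nbr ord x = Some z &
    forall qs' z', qs' \in ord -> run qs' = Some z' -> (U z <= U z')%N].
Proof.
move=> qs0_ord run_z0; rewrite /DeepFlip.
have [[st0|[qs qs_ord [z run_z ->]]] _ min_ord] := DeepFlip_foldP (#|Rt|.+1, None) ord.
  by have := min_ord _ _ qs0_ord run_z0; rewrite st0 /= ltnNge max_card.
by exists qs, z; split=> // qs' z' /min_ord; apply.
Qed.
End DeepFlipSelection.

Section LocalView.
Variables (R : realType) (c d d0 : nat) (C0 : {set word d}).
Variables (n : nat) (Rt : finType) (nbr : Rt -> d.-tuple 'I_n).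
Hypotheses (C0_0 : 0 \in C0) (C0_dist : min_distance C0 d0) (G_reg : regular nbr c).
Variable y : word n.
Hypothesis y_Tanner : y \in Tanner nbr C0.

Lemma restrict_Tanner v : restrict nbr y v \in C0.
Proof. by move: y_Tanner; rewrite inE => /forallP. Qed.

Section FixedWord.
Variable x : word n.
Local Notation S := (Fset x y).

Definition err_deg v := #|[set i in S | i \in nbr v]|.

Lemma dH_restrict v : dH (restrict nbr x v) (restrict nbr y v) = err_deg v.
Proof.
have nbr_inj : injective (tnth (nbr v)) by apply/tuple_uniqP; exact: G_reg.1.
rewrite /dH /err_deg -(card_imset _ nbr_inj); apply: eq_card => i.
apply/imsetP/idP => [[k xy_k ->] | ].
  by move: xy_k; rewrite !inE !mxE => ->; rewrite mem_tnth.
by rewrite !inE => /andP[xy_i /tnthP[k i_k]]; exists k; rewrite // inE !mxE -i_k.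
Qed.

Lemma sum_err_deg : (\sum_v err_deg v = c * #|S|)%N.
Proof.
rewrite -(double_counting S (fun v i => i \in nbr v)).
by under eq_bigr do rewrite G_reg.2; rewrite sum_nat_const mulnC.
Qed.

Lemma in_Nset v : (v \in Nset nbr S) = (0 < err_deg v)%N.
Proof.
rewrite inE; apply/exists_inP/card_gt0P => [[i S_i v_i]|[i]].
  by exists i; rewrite inE S_i.
by rewrite inE => /andP[]; exists i.
Qed.

Lemma card_Nset_le : (#|Nset nbr S| <= c * #|S|)%N.
Proof.
rewrite -sum1_card -sum_err_deg big_mkcond /=; apply: leq_sum => v _.
by rewrite in_Nset; case: ifP.
Qed.

Lemma restrict_err_deg0 v : err_deg v = 0%N -> restrict nbr x v = restrict nbr y v.
Proof. by move=> e0; apply/eqP; rewrite -dH_eq0 dH_restrict e0. Qed.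

Lemma Uset_sub_Nset : Uset nbr C0 x \subset Nset nbr S.
Proof.
apply/subsetP => v; rewrite inE in_Nset lt0n; apply: contraNN => /eqP/restrict_err_deg0 ->.
exact: restrict_Tanner.
Qed.

Lemma card_Uset_le : (#|Uset nbr C0 x| <= c * #|S|)%N.
Proof. exact: leq_trans (subset_leq_card Uset_sub_Nset) card_Nset_le. Qed.

Lemma err_deg_Nset_Uset v : v \in Nset nbr S :\: Uset nbr C0 x -> (d0 <= err_deg v)%N.
Proof.
rewrite in_setD in_Nset inE negbK => /andP[x_C0 e_gt0]; rewrite -dH_restrict.
apply: C0_dist.2 x_C0 (restrict_Tanner v) _.
by apply: contraTneq e_gt0 => xy; rewrite -dH_restrict xy dHxx.
Qed.

Local Notation wv := (wv C0 nbr x).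
Local Notation kv := (kv C0 nbr x).

Lemma wv_correct v : (2 * err_deg v < d0)%N -> wv v = restrict nbr y v.
Proof.
move=> e_small; apply: (Decode_unique C0_0 C0_dist (restrict_Tanner v)).
by rewrite dH_sym dH_restrict.
Qed.

Lemma kv_correct v : (2 * err_deg v < d0)%N -> kv v = err_deg v.
Proof. by move=> e_small; rewrite /kv (wv_correct e_small) dH_sym dH_restrict. Qed.

Lemma kv_wrong v : wv v != restrict nbr y v -> (d0 <= kv v + err_deg v)%N.
Proof.
move=> wrong; apply: leq_trans (C0_dist.2 _ _ (Decode_in C0_0 _) (restrict_Tanner v) wrong) _.
by rewrite /kv -dH_restrict dH_triangle.
Qed.

Local Notation active := (active R d0 C0 nbr x).
Local Notation firstdiff := (firstdiff C0 nbr x).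

Lemma activeE v : active v = (0 < kv v)%N && (2 * kv v < d0)%N.
Proof. by rewrite /active /tpar ltr_pdivlMr // -natrM ltr_nat mulnC. Qed.

Lemma firstdiff_unique v i j : firstdiff v i -> firstdiff v j -> i = j.
Proof.
move=> /andP[i_diff /forall_inP i_min] /andP[j_diff /forall_inP j_min].
by apply/val_inj/eqP; rewrite eqn_leq i_min // j_min.
Qed.

Lemma firstdiff_exists v : active v -> exists i, firstdiff v i.
Proof.
rewrite activeE => /andP[/card_gt0P[k k_diff] _].
have i0_diff : tnth (nbr v) k \in diffN C0 nbr x v by apply/imsetP; exists k.
have [i i_diff i_min] := arg_minnP (fun i : 'I_n => val i) i0_diff.
by exists i; apply/andP; split=> //; apply/forall_inP.
Qed.

Lemma firstdiff_nbr v i : firstdiff v i -> i \in nbr v.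
Proof. by case/andP => /imsetP[k _ ->] _; apply: mem_tnth. Qed.

Lemma firstdiff_Fset v i : wv v = restrict nbr y v -> firstdiff v i -> i \in S.
Proof.
move=> wv_y /andP[/imsetP[k] + -> _]; rewrite inE wv_y !mxE.
by rewrite inE eq_sym.
Qed.

Lemma active_err_deg v : active v -> (0 < err_deg v)%N.
Proof.
move=> act; rewrite lt0n; apply: contraTneq act => e0.
by rewrite activeE kv_correct e0 // muln0 (min_distance_gt0 C0_dist).
Qed.

Lemma inactive_err_deg v : (0 < err_deg v)%N -> ~~ active v -> (d0 <= 2 * err_deg v)%N.
Proof.
move=> e_gt0; rewrite activeE [(d0 <= _)%N]leqNgt; apply: contra => e_small.
by rewrite kv_correct // e_gt0 e_small.
Qed.

Lemma active_firstdiff_notin v i :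
  active v -> firstdiff v i -> i \notin S -> (d0 < 2 * err_deg v)%N.
Proof.
move=> act fd_i i_S.
have wrong : wv v != restrict nbr y v.
  by apply: contraNneq i_S => wv_y; apply: firstdiff_Fset wv_y fd_i.
by move: act (kv_wrong wrong); rewrite activeE; lia.
Qed.

(* [c d0] times the value [p_i] accumulated by DeterFlip. *)
Definition pnum i := (\sum_(v | active v && firstdiff v i) (d0 - 2 * kv v))%N.

Lemma pnum_le i : (pnum i <= c * d0)%N.
Proof.
apply: (@leq_trans (\sum_(v | i \in nbr v) d0)%N); last first.
  by rewrite sum_nat_const -(G_reg.2 i) cardsE.
rewrite /pnum big_mkcond [X in (_ <= X)%N]big_mkcond /=; apply: leq_sum => v _.
by case: ifP => [/andP[_ /firstdiff_nbr ->]|]; rewrite ?leq_subr.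
Qed.

Lemma card_firstdiff_le (A : {set 'I_n}) v :
  (#|[set i in A | active v && firstdiff v i]| <=
   active v && [exists i in A, firstdiff v i])%N.
Proof.
case: (boolP (active v && _)) => [_|]; last first.
  move=> no_fd; rewrite leqn0 cards_eq0; apply/eqP/setP => i.
  rewrite !inE; apply: contraNF no_fd => /and3P[A_i -> fd_i] /=.
  by apply/exists_inP; exists i.
apply/card_le1_eqP => i j; rewrite !inE => /and3P[_ _ fd_i] /and3P[_ _ fd_j].
exact: firstdiff_unique fd_j fd_i.
Qed.

(* Every flipped bit is the first discrepancy of some active check, and each
   active check has exactly one first discrepancy. *)
Lemma card_pnum_eq_le (A : {set 'I_n}) j : (0 < j)%N ->
  (#|[set i in A | pnum i == j]| <=
   #|[set v | active v && [exists i in A, firstdiff v i]]|)%N.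
Proof.
move=> j_gt0.
apply: (@leq_trans (\sum_(i in A) #|[set v | active v && firstdiff v i]|)%N).
  rewrite -sum1_card big_mkcond [X in (_ <= X)%N]big_mkcond /=; apply: leq_sum => i _.
  rewrite inE; case: (i \in A) => //=; case: eqP => // pnum_j.
  case: (pickP (fun v => active v && firstdiff v i)) => [v fd_v | no_fd].
    by apply/card_gt0P; exists v; rewrite inE.
  by move: j_gt0; rewrite -pnum_j /pnum big_pred0.
rewrite (double_counting A (fun v i => active v && firstdiff v i)).
rewrite -sum1_card [X in (_ <= X)%N]big_mkcond /=; apply: leq_sum => v _.
by rewrite inE; apply: card_firstdiff_le.
Qed.

Lemma card_flipped_le j : (0 < j)%N -> (#|[set i | pnum i == j]| <= c * #|S|)%N.
Proof.
move=> j_gt0; apply: leq_trans card_Nset_le.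
have := card_pnum_eq_le [set: 'I_n] j_gt0.
rewrite (_ : [set i in _ | _] = [set i | pnum i == j]); last by apply/setP => i; rewrite !inE.
move/leq_trans; apply; apply/subset_leq_card/subsetP => v.
by rewrite inE in_Nset => /andP[/active_err_deg].
Qed.

Lemma card_flipped_notin_le j : (0 < j)%N ->
  (d0 * #|[set i in ~: S | pnum i == j]| <= 2 * (c * #|S|))%N.
Proof.
move=> j_gt0; rewrite -sum_err_deg big_distrr /=.
apply: leq_trans (markov_card (fun v => 2 * err_deg v)%N d0).
rewrite leq_mul2l; apply/orP; right.
apply: leq_trans (card_pnum_eq_le _ j_gt0) _; apply/subset_leq_card/subsetP => v.
rewrite !inE => /andP[act /exists_inP[i]]; rewrite inE => i_S fd_i.
exact: ltnW (active_firstdiff_notin act fd_i i_S).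
Qed.

Definition sgn i : R := if i \in S then 1 else -1.
Definition gain j : R := \sum_i sgn i * (pnum i == j)%:R.
Definition total_gain : R := \sum_i sgn i * (pnum i)%:R.

Lemma total_gainE : total_gain = \sum_(j < (c * d0).+1) j%:R * gain j.
Proof.
rewrite /gain /total_gain; under [RHS]eq_bigr do rewrite mulr_sumr.
rewrite exchange_big /=; apply: eq_bigr => i _.
have pnum_ord : (pnum i < (c * d0).+1)%N by rewrite ltnS pnum_le.
rewrite (bigD1 (Ordinal pnum_ord)) //= eqxx mulr1 mulrC big1 ?addr0 // => j j_neq.
suff /negbTE-> : pnum i != j by rewrite mulr0 mulr0.
by apply: contra j_neq => /eqP pnum_j; apply/eqP/val_inj.
Qed.

(* A correctly decoded check votes for a bit of [S]; a wrongly decoded one is at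
   distance at least [d0 - err_deg v] from its decoding. *)
Lemma check_gain_ge v :
  d0%:R * (0 < err_deg v)%N%:R - 2 * (err_deg v)%:R <=
  \sum_(i | active v && firstdiff v i) sgn i * (d0 - 2 * kv v)%N%:R.
Proof.
have [act|inact] := boolP (active v); last first.
  rewrite big_pred0 //; have [->|e_gt0] := posnP (err_deg v).
    by rewrite mulr0 mulr0 subr0.
  have := inactive_err_deg e_gt0 inact; rewrite -(ler_nat R) natrM mulr1; lra.
have [i0 fd_i0] := firstdiff_exists act.
rewrite (big_pred1 i0) => [|i /=]; last first.
  by apply/idP/eqP => [/firstdiff_unique/(_ fd_i0)|->].
rewrite active_err_deg // mulr1.
move: act; rewrite activeE => /andP[_ kv_small].
rewrite natrB ?(ltnW kv_small) // natrM.
have := kv_small; rewrite -(ltr_nat R) natrM => kv_small'.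
have [wv_y|wrong] := eqVneq (wv v) (restrict nbr y v).
  rewrite /sgn (firstdiff_Fset wv_y fd_i0) mul1r.
  by rewrite /kv wv_y dH_sym dH_restrict.
have := kv_wrong wrong; rewrite -(ler_nat R) natrD => far.
by rewrite /sgn; case: ifP => _; lra.
Qed.

Lemma total_gain_ge : d0%:R * #|Nset nbr S|%:R - 2 * (c * #|S|)%:R <= total_gain.
Proof.
rewrite /total_gain.
under eq_bigr do rewrite /pnum natr_sum mulr_sumr big_mkcond /=.
rewrite exchange_big /=.
under [X in _ <= X]eq_bigr do rewrite -big_mkcond /=.
apply: le_trans (ler_sum _ (fun v _ => check_gain_ge v)).
rewrite sumrB -!mulr_sumr -!natr_sum sum_err_deg.
rewrite -sum1_card [in X in _ * X]big_mkcond /=.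
by under [in X in _ * X]eq_bigr do rewrite in_Nset.
Qed.

Lemma Uset_count :
  (d0 * #|Nset nbr S :\: Uset nbr C0 x| + #|Uset nbr C0 x| <= c * #|S|)%N.
Proof.
rewrite -sum_err_deg -sum1_card -[#|Uset _ _ _|]sum1_card big_distrr /=.
rewrite [X in (X + _)%N]big_mkcond [X in (_ + X)%N]big_mkcond -big_split /=.
apply: leq_sum => v _; rewrite muln1.
have [vU|vNU] := boolP (v \in Uset nbr C0 x).
  by rewrite in_setD vU /= add0n -in_Nset (subsetP Uset_sub_Nset).
by rewrite addn0; case: ifP => // /err_deg_Nset_Uset.
Qed.

Hypothesis c_gt0 : (0 < c)%N.

Lemma pvalE i : pval R c d0 C0 nbr x i = (pnum i)%:R / (c * d0)%:R.
Proof.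
have d0_gt0 := min_distance_gt0 C0_dist.
rewrite /pval /pnum natr_sum mulr_suml; apply: eq_bigr => v /andP[].
rewrite activeE => /andP[_ kv_small] _.
rewrite natrB ?(ltnW kv_small) // /tpar !natrM; field.
by rewrite !pnatr_eq0 -!lt0n c_gt0 d0_gt0.
Qed.

Local Notation flip j := (DeterFlip c d0 C0 nbr x ((j%:R : R) / (c * d0)%:R)).

Lemma flip_entry j i : flip j 0 i = if pnum i == j then x 0 i + 1 else x 0 i.
Proof.
have cd0_gt0 : (0 < c * d0)%N by rewrite muln_gt0 c_gt0 (min_distance_gt0 C0_dist).
rewrite mxE pvalE; congr (if _ then _ else _); apply/eqP/eqP => [|-> //].
move/(congr1 ( *%R^~ (c * d0)%:R)); rewrite !divfK ?pnatr_eq0 -?lt0n //.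
by move/eqP; rewrite eqr_nat => /eqP.
Qed.

Lemma Fset_flip j : Fset x (flip j) = [set i | pnum i == j].
Proof.
apply/setP => i; rewrite !inE flip_entry.
by case: (pnum i == j); rewrite ?eqxx // eq_sym F2_add1_neq eqxx.
Qed.

Lemma Fset_flip_y j : Fset (flip j) y = [set i | (i \in S) != (pnum i == j)].
Proof.
apply/setP => i; rewrite !inE flip_entry.
by case: (pnum i == j); rewrite ?F2_add1_neq; case: (x 0 i == y 0 i).
Qed.

Lemma card_Fset_flip j : (#|Fset (flip j) y|%:R : R) = #|S|%:R - gain j.
Proof.
rewrite Fset_flip_y !natr_card /gain -sumrB; apply: eq_bigr => i _.
rewrite /sgn !inE.
by case: (x 0 i != y 0 i); case: (pnum i == j); rewrite /= ?mulr1n ?mulr0n; lra.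
Qed.

Lemma card_Fset_flip_le j :
  (#|Fset (flip j) y| <= #|S| + #|[set i in ~: S | pnum i == j]|)%N.
Proof.
rewrite Fset_flip_y; apply: leq_trans (leq_card_setU _ _).
apply/subset_leq_card/subsetP => i; rewrite !inE.
by case: (x 0 i != y 0 i); case: (pnum i == j).
Qed.

Lemma card_Fset_flip_growth j : (0 < j)%N ->
  (d0 * #|Fset (flip j) y| <= (d0 + 2 * c) * #|S|)%N.
Proof.
move=> j_gt0; apply: leq_trans (leq_mul (leqnn d0) (card_Fset_flip_le j)) _.
by move: (card_flipped_notin_le j_gt0); lia.
Qed.

Lemma card_Fset_flip_le_c j : (0 < j)%N -> (#|Fset (flip j) y| <= (1 + c) * #|S|)%N.
Proof.
move=> j_gt0; apply: leq_trans (card_Fset_flip_le j) _; rewrite mulSn leq_add2l.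
apply: leq_trans (card_flipped_le j_gt0); apply/subset_leq_card/subsetP => i.
by rewrite !inE => /andP[].
Qed.

Variables alpha delta : R.
Hypothesis G_exp : forall T : {set 'I_n}, #|T|%:R <= alpha * n%:R ->
  delta * c%:R * #|T|%:R <= #|Nset nbr T|%:R.

Lemma Uset_lower_bound : #|S|%:R <= alpha * n%:R ->
  (delta * d0%:R - 1) * c%:R * #|S|%:R <= (d0%:R - 1) * #|Uset nbr C0 x|%:R.
Proof.
move=> S_small; have N_big := G_exp S_small.
have count : (d0%:R * #|Nset nbr S :\: Uset nbr C0 x|%:R + #|Uset nbr C0 x|%:R
              <= c%:R * #|S|%:R :> R) by rewrite -!natrM -natrD ler_nat Uset_count.
have N_split : #|Nset nbr S|%:R =
    #|Nset nbr S :\: Uset nbr C0 x|%:R + #|Uset nbr C0 x|%:R :> R.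
  by rewrite -natrD -(cardsID (Uset nbr C0 x) (Nset nbr S)) addnC (setIidPr Uset_sub_Nset).
have := ler_wpM2l (ler0n R d0) N_big; rewrite N_split; nra.
Qed.

Hypothesis delta_d0_gt2 : 2 < delta * d0%:R.

Lemma exists_good_flip : #|S|%:R <= alpha * n%:R ->
  exists j, [/\ (0 < j)%N, (j <= c * d0)%N &
    #|Fset (flip j) y|%:R <= (1 - epspar c d0 delta) * #|S|%:R].
Proof.
move=> S_small; have N_big := G_exp S_small.
have d0_gt0 := min_distance_gt0 C0_dist.
have cR : 0 < c%:R :> R by rewrite ltr0n.
have d0R : 0 < d0%:R :> R by rewrite ltr0n.
have dd2 : 2 < delta * d0%:R := delta_d0_gt2.
have gain_lb : (delta * d0%:R - 2) * c%:R * #|S|%:R <= total_gain.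
  apply: le_trans total_gain_ge; rewrite natrM.
  have := ler_wpM2l (ltW d0R) N_big; nra.
have gain_ge0 : 0 <= \sum_(j < (c * d0).+1) j%:R * gain j.
  rewrite -total_gainE; apply: le_trans gain_lb.
  by rewrite !mulr_ge0 ?ler0n // subr_ge0 ltW.
have [j [j_gt0 j_le gain_j]] :=
  exists_ge_weighted_sum (N := c * d0) (ltn_mul c_gt0 d0_gt0) gain_ge0.
exists j; split => //.
rewrite -total_gainE natrX natrM in gain_j.
have delta_neq0 : delta != 0 by apply: contraTneq dd2 => ->; rewrite mul0r; lra.
rewrite card_Fset_flip epsparE //.
have cd0_gt0 : 0 < c%:R * d0%:R ^+ 2 :> R by rewrite mulr_gt0 ?exprn_gt0.
rewrite mulrBl mul1r lerD2l lerN2 mulrAC ler_pdivrMr // -(ler_pM2l cR).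
have := le_trans gain_lb gain_j; nra.
Qed.

End FixedWord.

Hypothesis c_gt0 : (0 < c)%N.
Variables alpha delta : R.

Local Notation F z := #|Fset z y|.
Local Notation U z := #|Uset nbr C0 z|.
Local Notation gam := (gammapar c d0 alpha delta).
Local Notation eps := (epspar c d0 delta).
Local Notation run := (runseq c d0 alpha delta C0 nbr).
Local Notation deterflip z q := (DeterFlip c d0 C0 nbr z q).

Lemma Uset_small z : (F z)%:R <= gam * n%:R -> (U z)%:R <= c%:R * gam * n%:R.
Proof.
move=> F_small; apply: le_trans (_ : c%:R * (F z)%:R <= _).
  by rewrite -natrM ler_nat card_Uset_le.
by rewrite -mulrA ler_wpM2l ?ler0n.
Qed.

Lemma cost_DeterFlip_le z q : q \in Wnz R c d0 ->
  (cost_DeterFlip c d0 C0 nbr z q <= 1 + 2 * c * F z)%N.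
Proof.
move=> q_W; have [j /andP[j_gt0 _] ->] := mem_Wnz q_W.
rewrite /cost_DeterFlip Fset_flip //.
by rewrite -addnA -mulnA mul2n -addnn leq_add2l leq_add ?card_Uset_le ?card_flipped_le.
Qed.

Lemma card_Fset_DeterFlip_le z q : q \in Wnz R c d0 ->
  (F (deterflip z q) <= (1 + c) * F z)%N.
Proof.
by move=> q_W; have [j /andP[j_gt0 _] ->] := mem_Wnz q_W; apply: card_Fset_flip_le_c.
Qed.

Lemma cost_runseq_le z qs : {subset qs <= Wnz R c d0} ->
  (cost_runseq c d0 alpha delta C0 nbr z qs <=
   size qs * (1 + c) ^ size qs * (1 + 2 * c * F z))%N.
Proof.
elim: qs z => [//|q qs IH] z qs_W /=.
have q_W : q \in Wnz R c d0 by apply: qs_W; rewrite mem_head.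
have := IH (deterflip z q) (fun q' q'_qs => qs_W q' (mem_behead (s := q :: qs) q'_qs)).
have F1_le := card_Fset_DeterFlip_le z q_W.
set m := size qs; set P := ((1 + c) ^ m)%N; set Q := (1 + 2 * c * F z)%N => IH1.
have Q1_le : (1 + 2 * c * F (deterflip z q) <= (1 + c) * Q)%N.
  by rewrite /Q; nia.
apply: (@leq_trans (Q + m * ((1 + c) * P) * Q)).
  apply: leq_add (cost_DeterFlip_le z q_W) _; case: ifP => // _.
  apply: leq_trans IH1 _; rewrite -!mulnA leq_mul2l [X in (_ <= X)%N]mulnCA.
  by rewrite leq_mul2l (mulnA 2) Q1_le !orbT.
by rewrite expnS mulSn (mulnDl ((1 + c) * P)) leq_add2r leq_pmull // muln_gt0 expn_gt0.
Qed.

Lemma cost_DeepFlip_le k ord z : perm_eq ord (qseqs R c d0 k) ->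
  (cost_DeepFlip c d0 alpha delta C0 nbr ord z <=
   size (qseqs R c d0 k) * (1 + k * (1 + c) ^ k * (1 + 2 * c)) * maxn 1 (F z))%N.
Proof.
move=> ord_perm.
apply: (@leq_trans (\sum_(qs <- ord) (1 + k * (1 + c) ^ k * (1 + 2 * c * F z)))).
  rewrite /cost_DeepFlip !big_seq; apply: leq_sum => qs qs_ord.
  have /qseqsP[<- qs_W] : qs \in qseqs R c d0 k by rewrite -(perm_mem ord_perm).
  by rewrite leq_add2l cost_runseq_le.
rewrite big_const_seq count_predT iter_addn_0 -(perm_size ord_perm) mulnC.
rewrite -(mulnA (size ord)) leq_mul2l; apply/orP; right.
have := leq_maxl 1 (F z); have := leq_maxr 1 (F z).
set M := maxn 1 (F z); set P := (k * (1 + c) ^ k)%N; nia.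
Qed.

Hypothesis delta_d0_gt2 : 2 < delta * d0%:R.
Hypothesis G_exp : forall T : {set 'I_n}, #|T|%:R <= alpha * n%:R ->
  delta * c%:R * #|T|%:R <= #|Nset nbr T|%:R.
Hypotheses (alpha_gt0 : 0 < alpha) (delta_gt0 : 0 < delta) (delta_le1 : delta <= 1).

(* This is the invariant for which [gammapar] is tuned: a non-abandoned
   configuration with few errors cannot leave the expansion regime in one step. *)
Lemma DeterFlip_small z q : q \in Wnz R c d0 ->
  (F z)%:R <= alpha * n%:R -> (U z)%:R <= c%:R * gam * n%:R ->
  (F (deterflip z q))%:R <= alpha * n%:R.
Proof.
move=> q_W F_small U_small; have [j /andP[j_gt0 _] ->] := mem_Wnz q_W.
have lower := Uset_lower_bound G_exp F_small.
have := card_Fset_flip_growth z c_gt0 j_gt0; rewrite -(ler_nat R) !natrM natrD natrM.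
set f1 := (F _)%:R => growth.
have gamE := gammaparE alpha c_gt0 delta_le1 delta_d0_gt2.
have d0R : 2 < d0%:R :> R by rewrite ltr_nat (d0_gt2 delta_le1 delta_d0_gt2).
have cR : 0 < c%:R :> R by rewrite ltr0n.
have K_gt0 : 0 < (delta * d0%:R - 1) * c%:R.
  by rewrite mulr_gt0 // subr_gt0 (lt_trans _ delta_d0_gt2) ?ltr1n.
have d0_pos : 0 < d0%:R :> R by apply: lt_trans d0R.
rewrite -(ler_pM2l K_gt0) -(ler_pM2l d0_pos).
apply: le_trans (_ : _ <= (d0%:R + 2 * c%:R) * ((delta * d0%:R - 1) * c%:R * (F z)%:R)) _.
  by rewrite mulrCA [in leRHS]mulrCA; apply: ler_wpM2l; [exact: ltW | exact: growth].
apply: le_trans (_ : _ <= (d0%:R + 2 * c%:R) * ((d0%:R - 1) * (c%:R * gam * n%:R))) _.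
  apply: ler_wpM2l; first by rewrite addr_ge0 ?mulr_ge0 ?ler0n.
  apply: le_trans lower _; apply: ler_wpM2l => //.
  by rewrite subr_ge0 ltW // (lt_trans _ d0R) ?ltr1n.
rewrite le_eqVlt; apply/predU1l.
transitivity (c%:R * n%:R * (gam * ((d0%:R + 2 * c%:R) * (d0%:R - 1)))); first by ring.
by rewrite gamE; ring.
Qed.

Lemma runseq_small qs z z' : {subset qs <= Wnz R c d0} ->
  (F z)%:R <= alpha * n%:R -> (U z)%:R <= c%:R * gam * n%:R ->
  run z qs = Some z' -> (F z')%:R <= alpha * n%:R.
Proof.
elim: qs z => [|q qs IH] z qs_W F_small U_small /=; first by case=> <-.
case: ifPn => // /negbTE; rewrite ltNge => /negbFE U1_small run_z'.
apply: IH run_z' => //; first by move=> q' q'_qs; apply: qs_W; rewrite inE q'_qs orbT.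
by apply: DeterFlip_small => //; apply: qs_W; rewrite mem_head.
Qed.

Lemma exists_good_run k z : (F z)%:R <= gam * n%:R ->
  exists qs z', [/\ qs \in qseqs R c d0 k, run z qs = Some z' &
    (F z')%:R <= (1 - eps) ^+ k * (F z)%:R].
Proof.
have gam_le := gammapar_le c_gt0 delta_le1 delta_d0_gt2 (ltW alpha_gt0).
have [eps_gt0 eps_lt1] := andP (epspar_gt0_lt1 c_gt0 delta_gt0 delta_le1 delta_d0_gt2).
elim: k z => [|k IH] z F_small; first by exists [::], z; rewrite expr0 mul1r inE.
have F_alpha : (F z)%:R <= alpha * n%:R by apply: le_trans F_small _; apply: ler_wpM2r.
have [j [j_gt0 j_le F1_le]] := exists_good_flip c_gt0 G_exp delta_d0_gt2 F_alpha.
set z1 := deterflip z _ in F1_le.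
have F1_F : (F z1)%:R <= (F z)%:R :> R.
  by apply: le_trans F1_le _; rewrite ler_piMl ?ler0n //; lra.
have [qs [z' [qs_k run_z' F'_le]]] := IH z1 (le_trans F1_F F_small).
exists (j%:R / (c * d0)%:R :: qs), z'; split.
- by apply: qseqs_cons => //; rewrite Wnz_natr // j_gt0.
- by rewrite /= -/z1 ltNge ifN ?negbK // Uset_small // (le_trans F1_F).
- apply: le_trans F'_le _; rewrite exprSr -mulrA ler_wpM2l //.
  by rewrite exprn_ge0 // subr_ge0 ltW.
Qed.

(* [spar] is chosen so that [(1 - eps) ^+ spar] is at most
   [(delta d0 - 1) / (2 (d0 - 1))], the factor that [Uset_lower_bound] turns into 1/2. *)
Lemma Fset_halved x x' : (F x')%:R <= alpha * n%:R ->
  (U x')%:R <= c%:R * ((1 - eps) ^+ spar c d0 delta * (F x)%:R) -> (2 * F x' <= F x)%N.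
Proof.
move=> F'_small U'_le; have lower := Uset_lower_bound G_exp F'_small.
have pow := expr_spar_le c_gt0 delta_gt0 delta_le1 delta_d0_gt2.
have d0R : 2 < d0%:R :> R by rewrite ltr_nat (d0_gt2 delta_le1 delta_d0_gt2).
have cR : 0 < c%:R :> R by rewrite ltr0n.
have d0_1 : 0 < d0%:R - 1 :> R by rewrite subr_gt0 (lt_trans _ d0R) ?ltr1n.
have K_gt0 : 0 < (delta * d0%:R - 1) * c%:R.
  by rewrite mulr_gt0 // subr_gt0 (lt_trans _ delta_d0_gt2) ?ltr1n.
rewrite -(ler_nat R) natrM -(ler_pM2l K_gt0) mulrCA.
apply: le_trans (_ : _ <= 2 * ((d0%:R - 1) * (c%:R * ((delta * d0%:R - 1) /
   (2 * (d0%:R - 1)) * (F x)%:R)))) _.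
  rewrite ler_pM2l //; apply: le_trans lower _; rewrite ler_pM2l //.
  by apply: le_trans U'_le _; rewrite ler_pM2l // ler_wpM2r.
by rewrite le_eqVlt; apply/predU1l; field; rewrite gt_eqF.
Qed.

Lemma DeepFlip_halves ord x : perm_eq ord (qseqs R c d0 (spar c d0 delta)) ->
  (F x)%:R <= gam * n%:R ->
  exists2 x', DeepFlip c d0 alpha delta C0 nbr ord x = Some x' & (2 * F x' <= F x)%N.
Proof.
move=> ord_perm F_small; set s := spar c d0 delta.
have gam_le := gammapar_le c_gt0 delta_le1 delta_d0_gt2 (ltW alpha_gt0).
have F_alpha : (F x)%:R <= alpha * n%:R by apply: le_trans F_small _; rewrite ler_wpM2r.
have [qs0 [z0 [qs0_s run_z0 F_z0]]] := exists_good_run s F_small.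
have qs0_ord : qs0 \in ord by rewrite (perm_mem ord_perm).
have [qs [x' [qs_ord run_x' -> U_min]]] := DeepFlip_Some qs0_ord run_z0.
exists x' => //; apply: Fset_halved.
  have /qseqsP[_ qs_W] : qs \in qseqs R c d0 s by rewrite -(perm_mem ord_perm).
  exact: runseq_small qs_W F_alpha (Uset_small F_small) run_x'.
apply: le_trans (_ : c%:R * (F z0)%:R <= _); last by rewrite ler_wpM2l ?ler0n.
by rewrite -natrM ler_nat (leq_trans (U_min _ _ qs0_ord run_z0)) ?card_Uset_le.
Qed.

End LocalView.

Unset Implicit Arguments.
Set Strict Implicit.
Theorem theorem4p6 (R : realType) (c d d0 : nat) (alpha delta : R)
    (C0 : {set 'rV['F_2]_d}) :
  (0 < c)%N -> (0 < d)%N ->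
  0 < alpha <= 1 -> 0 < delta <= 1 ->
  linear_code C0 -> min_distance C0 d0 ->
  2 < delta * d0%:R ->
  exists K : nat,
  forall (n : nat) (Rt : finType) (nbr : Rt -> d.-tuple 'I_n),
    expander nbr c alpha delta ->
  forall ord : seq (seq R),
    perm_eq ord (qseqs R c d0 (spar c d0 delta)) ->
  forall x y : 'rV['F_2]_n,
    y \in Tanner nbr C0 ->
    (dH x y)%:R <= gammapar c d0 alpha delta * n%:R ->
    exists x' : 'rV['F_2]_n,
      [/\ DeepFlip c d0 alpha delta C0 nbr ord x = Some x',
          (2 * #|Fset x' y| <= #|Fset x y|)%N &
          (cost_DeepFlip c d0 alpha delta C0 nbr ord x <= K * maxn 1 #|Fset x y|)%N].
Proof.
move=> c_gt0 _ /andP[alpha_gt0 _] /andP[delta_gt0 delta_le1] [C0_0 _] C0_dist delta_d0_gt2.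
set s := spar c d0 delta.
exists (size (qseqs R c d0 s) * (1 + s * (1 + c) ^ s * (1 + 2 * c)))%N.
move=> n Rt nbr [G_reg G_exp] ord ord_perm x y y_Tanner F_small.
have [x' DeepFlip_x' halves] := DeepFlip_halves C0_0 C0_dist G_reg y_Tanner c_gt0
  delta_d0_gt2 G_exp alpha_gt0 delta_gt0 delta_le1 ord_perm F_small.
exists x'; split=> //.
exact (cost_DeepFlip_le C0_0 C0_dist G_reg y_Tanner c_gt0 alpha delta x ord_perm).
Qed.
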